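(* Let $a\ge1$ be an integer with $a^dq>1$. For $l=1,2,\dots$ let $L_l=\{x\in\mathbb{R}^d: a^{(l-1)^d}<|x|<a^{l^d}\}$. Then $P$-almost surely there exists $l_0(\omega)$ such that for every $l\ge l_0(\omega)$ the layer $L_l$ contains a cube $Q(l,n)$ (entirely inside $L_l$) on which $V(x,\omega)=0$.
   Context: For $k\in\mathbb{Z}^d$ let $Q_k=\{x\in\mathbb{R}^d:\|x-k\|_\infty\le1/2\}$, let $(\varepsilon_k)$ be i.i.d. with $P\{\varepsilon_k=1\}=p>0$, $P\{\varepsilon_k=0\}=q=1-p>0$, and $V(x,\omega)=\sum_k\varepsilon_kI_{Q_k}(x)$. For an integer $l\ge1$, $Q(l,n)$, $n\in\mathbb{Z}^d$, are cubes of edge length $l$ partitioning $\mathbb{R}^d$, each a union of $l^d$ unit cubes $Q_k$ (so that $V=0$ on $Q(l,n)$ iff all its $l^d$ unit cubes have $\varepsilon_k=0$). *)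

From Stdlib Require Import Reals ZArith List.
Open Scope R_scope.

(* Sites of Z^d are lists of integers of length d; a configuration
   (sample point omega) is a map site -> bool, with omega k = true
   meaning eps_k = 1 and omega k = false meaning eps_k = 0. *)
Definition site (d : nat) (k : list Z) : Prop := length k = d.

Fixpoint sumR (d : nat) (f : nat -> R) : R :=
  match d with O => 0 | S d' => sumR d' f + f d' end.

Definition enorm (d : nat) (x : nat -> R) : R := sqrt (sumR d (fun i => x i ^ 2)).

(* Cylinder sets of the Bernoulli product measure: a finite list of
   constraints (site, value) at distinct sites. *)
Definition cylinder := list (list Z * bool).

Definition valid_cyl (d : nat) (c : cylinder) : Prop :=
  Forall (fun s : list Z * bool => site d (fst s)) c /\ NoDup (map (fun s : list Z * bool => fst s) c).

Definition in_cyl (c : cylinder) (omega : list Z -> bool) : Prop :=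
  Forall (fun s : list Z * bool => omega (fst s) = snd s) c.

(* P{eps_k = 1} = p, P{eps_k = 0} = q = 1 - p *)
Definition cyl_prob (p : R) (c : cylinder) : R :=
  fold_right (fun (s : list Z * bool) (acc : R) => (if snd s then p else 1 - p) * acc) 1 c.

(* N is a P-null set: for every eps > 0 it is covered by countably many
   cylinders of total probability <= eps (null sets of the product measure). *)
Definition null_set (d : nat) (p : R) (N : (list Z -> bool) -> Prop) : Prop :=
  forall eps : R, eps > 0 ->
    exists C : nat -> cylinder,
      (forall j, valid_cyl d (C j)) /\
      (forall omega, N omega -> exists j, in_cyl (C j) omega) /\
      (forall m, sum_f_R0 (fun j => cyl_prob p (C j)) m <= eps).

Definition almost_surely (d : nat) (p : R) (E : (list Z -> bool) -> Prop) : Prop :=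
  null_set d p (fun omega => ~ E omega).

(* The cube Q(l,n), n in Z^d (only coordinates 0..d-1 of n matter):
   union of the unit cubes Q_k with l*n_i <= k_i <= l*n_i + l - 1,
   i.e. the closed cube prod_i [l n_i - 1/2, l n_i + l - 1/2]. *)
Definition in_Qln (d l : nat) (n : nat -> Z) (x : nat -> R) : Prop :=
  forall i, (i < d)%nat ->
    IZR (Z.of_nat l * n i) - /2 <= x i <= IZR (Z.of_nat l * n i) + INR l - /2.

Definition site_in_Qln (d l : nat) (n : nat -> Z) (k : list Z) : Prop :=
  site d k /\
  forall i, (i < d)%nat ->
    (Z.of_nat l * n i <= nth i k 0%Z <= Z.of_nat l * n i + Z.of_nat l - 1)%Z.

Definition in_layer (d a l : nat) (x : nat -> R) : Prop :=
  INR a ^ ((l - 1) ^ d) < enorm d x < INR a ^ (l ^ d).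

(* V(.,omega) = 0 on Q(l,n) iff eps_k = 0 for all unit cubes Q_k in Q(l,n) *)
Definition V_zero_on_Qln (d l : nat) (n : nat -> Z) (omega : list Z -> bool) : Prop :=
  forall k, site_in_Qln d l n k -> omega k = false.

(** Borel–Cantelli over the layers.  With [R = a^(l^d)], the slab [R/2 < x_0 <= 3R/4],
    [|x_i| <= R/(2d)] lies inside [L_l] and holds [N >= (R/(16 d l))^d] disjoint cubes
    [Q(l,n)].  No cube of the layer carries [V = 0] only if each of them contains a site
    with [eps_k = 1], an event of probability [(1 - q^(l^d))^N <= 1/(1 + N q^(l^d))].  As
    [N q^(l^d) >= (a^d q)^(l^d) / (16 d l)^d] grows exponentially, this is at most
    [1/(l(l+1))], whose tails telescope: for every [L], the event "infinitely many layers
    without such a cube" is covered by cylinders of total probability at most [1/L]. *)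

From Stdlib Require Import Reals ZArith List Lia Lra Psatz Classical.
Open Scope R_scope.

Lemma NoDup_concat_map {A B : Type} (f : A -> list B) (L : list A) :
  NoDup L -> (forall x, In x L -> NoDup (f x)) ->
  (forall x y z, In x L -> In y L -> In z (f x) -> In z (f y) -> x = y) ->
  NoDup (concat (map f L)).
Proof.
  induction L as [|x L IH]; intros HN Hf Hd; simpl; [constructor|].
  inversion HN; subst.
  apply NoDup_app.
  - apply Hf; simpl; auto.
  - apply IH; auto.
    + intros; apply Hf; simpl; auto.
    + intros; eapply Hd; simpl; eauto.
  - intros z Hz Hz'. apply in_concat in Hz'. destruct Hz' as [l [Hl Hzl]].
    apply in_map_iff in Hl. destruct Hl as [y [<- Hy]].
    assert (x = y) by (eapply Hd; simpl; eauto). subst. contradiction.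
Qed.

Lemma NoDup_app_disjoint {A} (l m : list A) a : NoDup (l ++ m) -> In a l -> ~ In a m.
Proof.
  induction l; simpl; intros HN Hl Hm; [contradiction|].
  inversion HN as [|x l' Hx HN']; subst. destruct Hl as [->|Hl].
  - apply Hx, in_app_iff; auto.
  - exact (IHl HN' Hl Hm).
Qed.

Lemma length_concat_map_const {A B} (f : A -> list B) (L : list A) m :
  (forall x, In x L -> length (f x) = m) -> length (concat (map f L)) = (length L * m)%nat.
Proof.
  induction L; intros H; simpl; auto. rewrite length_app, H, IHL; simpl; auto.
  intros; apply H; simpl; auto.
Qed.

Lemma Forall2_nth_iff {A B} (P : A -> B -> Prop) (xs : list A) (ys : list B) dx dy :
  Forall2 P xs ys <->
  length xs = length ys /\ forall i, (i < length xs)%nat -> P (nth i xs dx) (nth i ys dy).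
Proof.
  revert ys; induction xs as [|x xs IH]; intros [|y ys]; split; intros H; simpl in *.
  - split; auto; intros; lia.
  - constructor.
  - inversion H.
  - destruct H; discriminate.
  - inversion H.
  - destruct H; discriminate.
  - inversion H; subst. apply IH in H5. destruct H5 as [H1 H2]. split; [lia|].
    intros [|i] Hi; auto. apply H2; lia.
  - destruct H as [H1 H2]. constructor.
    + apply (H2 0%nat); lia.
    + apply IH. split; [lia|]. intros i Hi. apply (H2 (S i)); lia.
Qed.

Section CartesianProduct.
Variable A : Type.

Fixpoint cart_prod (rs : list (list A)) : list (list A) :=
  match rs with
  | nil => nil :: nil
  | r :: rs' => concat (map (fun z => map (cons z) (cart_prod rs')) r)
  end.

Lemma in_cart_prod rs k : In k (cart_prod rs) <-> Forall2 (@In A) k rs.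
Proof.
  revert k; induction rs as [|r rs IH]; intros k; simpl; split.
  - intros [<-|[]]; constructor.
  - intros H; inversion H; auto.
  - intros H. apply in_concat in H. destruct H as [l [Hl Hk]].
    apply in_map_iff in Hl. destruct Hl as [z [<- Hz]].
    apply in_map_iff in Hk. destruct Hk as [k' [<- Hk']].
    constructor; auto. apply IH; auto.
  - intros H. inversion H; subst. apply in_concat. eexists. split.
    + apply in_map_iff. eexists; split; [reflexivity|eauto].
    + apply in_map. apply IH; auto.
Qed.

Lemma NoDup_cart_prod rs : Forall (@NoDup A) rs -> NoDup (cart_prod rs).
Proof.
  induction rs as [|r rs IH]; intros H; simpl.
  - constructor; [simpl; tauto|constructor].
  - inversion H; subst. apply NoDup_concat_map; auto.
    + intros z _. apply NoDup_map_NoDup_ForallPairs; auto.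
      intros a b _ _ E. injection E; auto.
    + intros x y z _ _ G1 G2. apply in_map_iff in G1. apply in_map_iff in G2.
      destruct G1 as [u [<- _]]; destruct G2 as [v [E _]]. injection E; auto.
Qed.

Lemma length_cart_prod rs :
  length (cart_prod rs) = fold_right (fun r acc => (length r * acc)%nat) 1%nat rs.
Proof.
  induction rs; simpl; auto.
  rewrite (length_concat_map_const _ _ (length (cart_prod rs))), IHrs; auto.
  intros; rewrite length_map; auto.
Qed.

End CartesianProduct.
Arguments cart_prod {A}.

Definition zseq (lo : Z) (n : nat) : list Z := map (fun i => (lo + Z.of_nat i)%Z) (seq 0 n).

Lemma in_zseq lo n z : In z (zseq lo n) <-> (lo <= z < lo + Z.of_nat n)%Z.
Proof.
  unfold zseq; rewrite in_map_iff; split.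
  - intros [i [<- Hi]]. apply in_seq in Hi. lia.
  - intros H. exists (Z.to_nat (z - lo)). split; [lia|]. apply in_seq. lia.
Qed.

Lemma NoDup_zseq lo n : NoDup (zseq lo n).
Proof.
  unfold zseq. apply NoDup_map_NoDup_ForallPairs; [|apply seq_NoDup].
  intros a b _ _ E. lia.
Qed.

Lemma length_zseq lo n : length (zseq lo n) = n.
Proof. unfold zseq; rewrite length_map, length_seq; auto. Qed.

(** * Cylinder events *)

Definition sum_cyl_prob (p : R) (cs : list cylinder) : R :=
  fold_right (fun c acc => cyl_prob p c + acc) 0 cs.

(* The event "some site of [B] carries [true]", split into the disjoint cylinders
   "the first such site is the [j]-th one". *)
Fixpoint cyls_some_true (B : list (list Z)) : list cylinder :=
  match B with
  | nil => nil
  | s :: B' => ((s, true) :: nil) :: map (cons (s, false)) (cyls_some_true B')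
  end.

Fixpoint cyls_all_hit (Bs : list (list (list Z))) : list cylinder :=
  match Bs with
  | nil => nil :: nil
  | B :: Bs' => concat (map (fun c => map (app c) (cyls_all_hit Bs')) (cyls_some_true B))
  end.

Lemma cyl_prob_app p c c' : cyl_prob p (c ++ c') = cyl_prob p c * cyl_prob p c'.
Proof. induction c; unfold cyl_prob in *; simpl; [lra|]. rewrite IHc; lra. Qed.

Lemma cyl_prob_ge0 p c : 0 <= p <= 1 -> 0 <= cyl_prob p c.
Proof.
  intros Hp; induction c as [|[s b] c IH]; unfold cyl_prob in *; simpl; [lra|].
  apply Rmult_le_pos; auto. destruct b; lra.
Qed.

Lemma sum_cyl_prob_ge0 p cs : 0 <= p <= 1 -> 0 <= sum_cyl_prob p cs.
Proof. intros; induction cs; simpl; [lra|]. pose proof (cyl_prob_ge0 p a H); lra. Qed.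

Lemma sum_cyl_prob_app p cs cs' :
  sum_cyl_prob p (cs ++ cs') = sum_cyl_prob p cs + sum_cyl_prob p cs'.
Proof. induction cs; simpl; [lra|]. rewrite IHcs; lra. Qed.

Lemma sum_cyl_prob_map_app p c cs :
  sum_cyl_prob p (map (app c) cs) = cyl_prob p c * sum_cyl_prob p cs.
Proof. induction cs; simpl; [lra|]. rewrite IHcs, cyl_prob_app; lra. Qed.

Lemma sum_cyl_prob_some_true p B : sum_cyl_prob p (cyls_some_true B) = 1 - (1 - p) ^ length B.
Proof.
  induction B as [|s B IH]; simpl; [lra|].
  rewrite (sum_cyl_prob_map_app p ((s, false) :: nil)), IH. unfold cyl_prob; simpl. lra.
Qed.

Lemma sum_cyl_prob_all_hit p Bs :
  sum_cyl_prob p (cyls_all_hit Bs) = fold_right (fun B acc => (1 - (1 - p) ^ length B) * acc) 1 Bs.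
Proof.
  induction Bs as [|B Bs IH]; simpl.
  - unfold cyl_prob; simpl; lra.
  - rewrite <- sum_cyl_prob_some_true, <- IH. induction (cyls_some_true B); simpl; [lra|].
    rewrite sum_cyl_prob_app, sum_cyl_prob_map_app, IHl. lra.
Qed.

Lemma in_cyl_app c c' omega : in_cyl c omega -> in_cyl c' omega -> in_cyl (c ++ c') omega.
Proof. unfold in_cyl; intros; apply Forall_app; auto. Qed.

Lemma cyls_some_true_cover (omega : list Z -> bool) B :
  (exists s, In s B /\ omega s = true) -> exists c, In c (cyls_some_true B) /\ in_cyl c omega.
Proof.
  induction B as [|s B IH]; intros [s0 [Hs Ho]]; simpl in *; [contradiction|].
  destruct (omega s) eqn:E.
  - exists ((s, true) :: nil). split; auto. repeat constructor; auto.
  - destruct Hs as [->|Hs]; [congruence|].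
    destruct IH as [c [Hc Hin]]; eauto.
    exists ((s, false) :: c). split; [right; apply in_map; auto|]. constructor; auto.
Qed.

Lemma cyls_all_hit_cover (omega : list Z -> bool) Bs :
  (forall B, In B Bs -> exists s, In s B /\ omega s = true) ->
  exists c, In c (cyls_all_hit Bs) /\ in_cyl c omega.
Proof.
  induction Bs as [|B Bs IH]; intros H; simpl.
  - exists nil; split; auto. constructor.
  - destruct (cyls_some_true_cover omega B) as [c1 [H1 H1']]; [apply H; simpl; auto|].
    destruct IH as [c2 [H2 H2']]; [intros; apply H; simpl; auto|].
    exists (c1 ++ c2). split; [|apply in_cyl_app; auto].
    apply in_concat. exists (map (app c1) (cyls_all_hit Bs)).
    split; [apply (in_map (fun c => map (app c) (cyls_all_hit Bs)))|apply in_map]; auto.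
Qed.

Lemma cyls_some_true_prefix B c : In c (cyls_some_true B) -> exists t, B = map fst c ++ t.
Proof.
  revert c; induction B as [|s B IH]; intros c Hc; simpl in *; [contradiction|].
  destruct Hc as [<-|Hc].
  - exists B; reflexivity.
  - apply in_map_iff in Hc. destruct Hc as [c' [<- Hc']].
    destruct (IH c' Hc') as [t Ht]. exists t. simpl. rewrite Ht; auto.
Qed.

Lemma cyls_all_hit_sites Bs c : NoDup (concat Bs) -> In c (cyls_all_hit Bs) ->
  NoDup (map fst c) /\ incl (map fst c) (concat Bs).
Proof.
  revert c; induction Bs as [|B Bs IH]; intros c HN Hc; simpl in *.
  - destruct Hc as [<-|[]]. simpl. split; [constructor|intros x []].
  - apply in_concat in Hc. destruct Hc as [l [Hl Hc]]. apply in_map_iff in Hl.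
    destruct Hl as [c1 [<- Hc1]]. apply in_map_iff in Hc. destruct Hc as [c2 [<- Hc2]].
    destruct (cyls_some_true_prefix _ _ Hc1) as [t ->].
    rewrite <- app_assoc in HN. rewrite map_app.
    destruct (IH c2 (NoDup_app_remove_l _ _ (NoDup_app_remove_l _ _ HN)) Hc2) as [N2 I2].
    split.
    + apply NoDup_app; [exact (NoDup_app_remove_r _ _ HN)|exact N2|].
      intros s Hs Hs'. apply (NoDup_app_disjoint _ _ s HN Hs).
      apply in_app_iff; right; apply I2; auto.
    + intros s Hs. rewrite <- app_assoc. apply in_app_iff in Hs as [Hs|Hs]; apply in_app_iff; auto.
      right; apply in_app_iff; auto.
Qed.

Lemma sum_cyl_prob_all_hit_const p m Bs : (forall B, In B Bs -> length B = m) ->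
  sum_cyl_prob p (cyls_all_hit Bs) = (1 - (1 - p) ^ m) ^ length Bs.
Proof.
  rewrite sum_cyl_prob_all_hit.
  induction Bs as [|B Bs IH]; intros H; simpl; auto.
  rewrite IH by (intros; apply H; simpl; auto). rewrite H by (simpl; auto). reflexivity.
Qed.

(** * Borel–Cantelli for cylinder covers *)

Lemma skipn_nth_cons {A} (F : list A) k d :
  (k < length F)%nat -> skipn k F = nth k F d :: skipn (S k) F.
Proof.
  revert k; induction F; intros k Hk; simpl in *; [lia|]. destruct k; simpl; auto.
  apply IHF; lia.
Qed.

Lemma sum_f_R0_cyl_prob_nth p F n : 0 <= p <= 1 -> (S n <= length F)%nat ->
  sum_f_R0 (fun j => cyl_prob p (nth j F nil)) n <= sum_cyl_prob p F.
Proof.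
  intros Hp Hn.
  enough (E : sum_f_R0 (fun j => cyl_prob p (nth j F nil)) n + sum_cyl_prob p (skipn (S n) F)
              = sum_cyl_prob p F)
    by (pose proof (sum_cyl_prob_ge0 p (skipn (S n) F) Hp); lra).
  induction n.
  - destruct F; simpl in *; [lia|]. lra.
  - simpl. rewrite <- IHn by lia. rewrite (skipn_nth_cons F (S n) nil) by lia. simpl. lra.
Qed.

Section BorelCantelli.
Variables (d : nat) (p : R) (cyls : nat -> list cylinder).
Hypothesis Hp : 0 <= p <= 1.

Definition cyls_from (L m : nat) : list cylinder := concat (map cyls (seq L m)).

Lemma cyls_from_S L m : cyls_from L (S m) = cyls_from L m ++ cyls (L + m).
Proof. unfold cyls_from. rewrite seq_S, map_app, concat_app; simpl. rewrite app_nil_r; auto. Qed.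

Lemma nth_cyls_from_le L m1 m2 j : (m1 <= m2)%nat -> (j < length (cyls_from L m1))%nat ->
  nth j (cyls_from L m2) nil = nth j (cyls_from L m1) nil.
Proof.
  intros Hm Hj. replace m2 with (m1 + (m2 - m1))%nat by lia.
  unfold cyls_from at 1. rewrite seq_app, map_app, concat_app. apply app_nth1; auto.
Qed.

Lemma length_cyls_from L m : (forall l, (L <= l)%nat -> cyls l <> nil) ->
  (m <= length (cyls_from L m))%nat.
Proof.
  intros H; induction m; simpl; [lia|]. rewrite cyls_from_S, length_app.
  destruct (cyls (L + m)) eqn:E; [exfalso; apply (H (L + m)%nat); auto; lia|]. simpl; lia.
Qed.

Lemma in_cyls_from L m c : In c (cyls_from L m) <-> exists l, (L <= l < L + m)%nat /\ In c (cyls l).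
Proof.
  unfold cyls_from. rewrite in_concat. split.
  - intros [x [Hx Hc]]. apply in_map_iff in Hx. destruct Hx as [l [<- Hl]].
    apply in_seq in Hl. exists l; auto.
  - intros [l [Hl Hc]]. exists (cyls l). split; auto. apply in_map, in_seq; lia.
Qed.

(* The summability condition [1/(l (l+1))] makes the tail from [L] telescope to [1/L]. *)
Lemma sum_cyl_prob_cyls_from L m : (1 <= L)%nat ->
  (forall l, (L <= l)%nat -> sum_cyl_prob p (cyls l) <= / (INR l * INR (S l))) ->
  sum_cyl_prob p (cyls_from L m) <= / INR L - / INR (L + m).
Proof.
  intros HL H. induction m.
  - rewrite Nat.add_0_r. unfold cyls_from; simpl; lra.
  - rewrite cyls_from_S, sum_cyl_prob_app. specialize (H (L + m)%nat ltac:(lia)).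
    replace (L + S m)%nat with (S (L + m)) by lia.
    assert (0 < INR (L + m)) by (apply lt_0_INR; lia).
    assert (/ INR (L + m) - / INR (S (L + m)) = / (INR (L + m) * INR (S (L + m)))).
    { rewrite S_INR. field; lra. }
    lra.
Qed.

Lemma null_set_of_layer_covers (N : (list Z -> bool) -> Prop) L0 :
  (1 <= L0)%nat ->
  (forall l c, (L0 <= l)%nat -> In c (cyls l) -> valid_cyl d c) ->
  (forall l, (L0 <= l)%nat -> cyls l <> nil) ->
  (forall l, (L0 <= l)%nat -> sum_cyl_prob p (cyls l) <= / (INR l * INR (S l))) ->
  (forall omega, N omega ->
     forall L, exists l, (L <= l)%nat /\ exists c, In c (cyls l) /\ in_cyl c omega) ->
  null_set d p N.
Proof.
  intros HL0 Hv Hne Hs Hcov eps Heps.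
  destruct (archimed_cor1 eps Heps) as [L1 [HL1 HL1']].
  set (L := Nat.max L0 L1).
  assert (Hne' : forall l, (L <= l)%nat -> cyls l <> nil) by (intros; apply Hne; lia).
  (* The [j]-th cylinder is the [j]-th entry of the concatenated layers [L, L+1, ...]. *)
  exists (fun j => nth j (cyls_from L (S j)) nil). split; [|split].
  - intros j. pose proof (length_cyls_from L (S j) Hne').
    assert (Hin : In (nth j (cyls_from L (S j)) nil) (cyls_from L (S j))) by (apply nth_In; lia).
    apply in_cyls_from in Hin as [l [Hl Hc]]. apply (Hv l); auto; lia.
  - intros omega Ho. destruct (Hcov omega Ho L) as [l [Hl [c [Hc Hin]]]].
    assert (HcF : In c (cyls_from L (S (l - L)))) by (apply in_cyls_from; exists l; split; auto; lia).
    destruct (In_nth _ _ nil HcF) as [j [Hj <-]]. exists j.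
    pose proof (length_cyls_from L (S j) Hne').
    destruct (Nat.le_ge_cases (S j) (S (l - L))).
    + rewrite <- (nth_cyls_from_le L (S j) (S (l - L)) j); auto; lia.
    + rewrite (nth_cyls_from_le L (S (l - L)) (S j) j); auto.
  - intros m.
    rewrite (sum_eq _ (fun j => cyl_prob p (nth j (cyls_from L (S m)) nil)))
      by (intros j Hj; rewrite (nth_cyls_from_le L (S j) (S m) j); auto; try lia;
          pose proof (length_cyls_from L (S j) Hne'); lia).
    pose proof (sum_f_R0_cyl_prob_nth p _ m Hp (length_cyls_from L (S m) Hne')).
    pose proof (sum_cyl_prob_cyls_from L (S m) ltac:(lia) (fun l Hl => Hs l ltac:(lia))).
    assert (0 < / INR (L + S m)) by (apply Rinv_0_lt_compat, lt_0_INR; lia).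
    assert (/ INR L <= / INR L1) by (apply Rinv_le_contravar; [apply lt_0_INR; lia|apply le_INR; lia]).
    unfold cylinder in *. lra.
Qed.

Lemma almost_surely_eventually (E : nat -> (list Z -> bool) -> Prop) L0 :
  (1 <= L0)%nat ->
  (forall l c, (L0 <= l)%nat -> In c (cyls l) -> valid_cyl d c) ->
  (forall l, (L0 <= l)%nat -> cyls l <> nil) ->
  (forall l, (L0 <= l)%nat -> sum_cyl_prob p (cyls l) <= / (INR l * INR (S l))) ->
  (forall l omega, (L0 <= l)%nat -> ~ E l omega -> exists c, In c (cyls l) /\ in_cyl c omega) ->
  almost_surely d p (fun omega => exists l0, forall l, (l0 <= l)%nat -> E l omega).
Proof.
  intros HL0 Hv Hne Hs Hcov. apply (null_set_of_layer_covers _ L0); auto.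
  intros omega Hev L. apply NNPP. intros Hfin. apply Hev. exists (Nat.max L L0).
  intros l Hl. apply NNPP. intros HE. apply Hfin. exists l. split; [lia|].
  apply (Hcov l); auto; lia.
Qed.

End BorelCantelli.

Lemma almost_surely_impl d p (E F : (list Z -> bool) -> Prop) :
  (forall omega, E omega -> F omega) -> almost_surely d p E -> almost_surely d p F.
Proof.
  intros HEF HE eps Heps. destruct (HE eps Heps) as [C [Hv [Hc Hs]]].
  exists C. split; [|split]; auto.
Qed.

Lemma bernoulli_ineq x n : 0 <= x -> 1 + INR n * x <= (1 + x) ^ n.
Proof.
  intros Hx; induction n; [simpl; lra|]. rewrite S_INR. simpl.
  assert (0 <= INR n) by apply pos_INR. nra.
Qed.

Lemma pow_le_one x n : 0 <= x <= 1 -> x ^ n <= 1.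
Proof. intros H; induction n; simpl; [lra|]. assert (0 <= x ^ n) by (apply pow_le; lra). nra. Qed.

Lemma pow_one_sub_mul_le x N : 0 <= x <= 1 -> (1 - x) ^ N * (1 + INR N * x) <= 1.
Proof.
  intros Hx. pose proof (bernoulli_ineq x N ltac:(lra)).
  assert (0 <= (1 - x) ^ N) by (apply pow_le; lra).
  apply Rle_trans with ((1 - x) ^ N * (1 + x) ^ N); [apply Rmult_le_compat_l; auto|].
  rewrite <- Rpow_mult_distr. apply pow_le_one. nra.
Qed.

Lemma sqrt_gt_1 b : 1 < b -> 1 < sqrt b /\ sqrt b * sqrt b = b.
Proof.
  intros Hb. split; [rewrite <- sqrt_1; apply sqrt_lt_1_alt; lra|apply sqrt_sqrt; lra].
Qed.

(* With [b = s^2]: [n (s-1) <= s^n] by Bernoulli, and squaring gives [n^2 (s-1)^2 <= b^n]. *)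
Lemma INR_le_pow_eventually b : 1 < b -> exists N, forall n, (N <= n)%nat -> INR n <= b ^ n.
Proof.
  intros Hb. destruct (sqrt_gt_1 b Hb) as [Hs Hss]. set (s := sqrt b) in *.
  assert (Hs1 : (s - 1) ^ 2 > 0) by (apply pow_lt; lra).
  destruct (INR_archimed ((s - 1) ^ 2) 1 Hs1) as [N HN].
  exists N. intros n Hn.
  assert (Hk : 1 <= INR n * (s - 1) ^ 2).
  { assert (INR N <= INR n) by (apply le_INR; auto). nra. }
  pose proof (bernoulli_ineq (s - 1) n ltac:(lra)). replace (1 + (s - 1)) with s in H by ring.
  replace (b ^ n) with (s ^ n * s ^ n) by (rewrite <- Rpow_mult_distr, Hss; auto).
  assert (0 <= INR n) by apply pos_INR.
  assert (0 <= INR n * (s - 1)) by nra.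
  assert (INR n * (s - 1) * (INR n * (s - 1)) <= s ^ n * s ^ n) by (apply Rmult_le_compat; lra).
  nra.
Qed.

Lemma poly_le_pow_eventually P : forall b K, 1 < b ->
  exists N, forall n, (N <= n)%nat -> K * INR n ^ P <= b ^ n.
Proof.
  induction P as [|P IH]; intros b K Hb.
  - destruct (INR_le_pow_eventually b Hb) as [N1 HN1].
    destruct (INR_unbounded K) as [N2 HN2].
    exists (Nat.max N1 N2). intros n Hn. simpl. rewrite Rmult_1_r.
    specialize (HN1 n ltac:(lia)). assert (INR N2 <= INR n) by (apply le_INR; lia). lra.
  - destruct (sqrt_gt_1 b Hb) as [Hc Hcc]. set (c := sqrt b) in *.
    destruct (IH c K Hc) as [N1 HN1]. destruct (INR_le_pow_eventually c Hc) as [N2 HN2].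
    exists (Nat.max N1 N2). intros n Hn.
    specialize (HN1 n ltac:(lia)). specialize (HN2 n ltac:(lia)).
    replace (b ^ n) with (c ^ n * c ^ n) by (rewrite <- Rpow_mult_distr, Hcc; auto).
    assert (0 <= INR n) by apply pos_INR.
    assert (0 < c ^ n) by (apply pow_lt; lra).
    replace (K * INR n ^ S P) with ((K * INR n ^ P) * INR n) by (simpl; ring).
    apply Rle_trans with (c ^ n * INR n); [apply Rmult_le_compat_r; auto|].
    apply Rmult_le_compat_l; lra.
Qed.

(** * Cubes and the Euclidean norm *)

Lemma sumR_ge_first d f : (1 <= d)%nat -> (forall i, 0 <= f i) -> f 0%nat <= sumR d f.
Proof.
  intros Hd Hf. induction d as [|d IH]; [lia|]. simpl. destruct d; simpl; [lra|].
  specialize (IH ltac:(lia)). specialize (Hf (S d)). simpl in IH. lra.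
Qed.

Lemma sumR_le_first d f c : (1 <= d)%nat -> (forall i, (1 <= i < d)%nat -> f i <= c) ->
  sumR d f <= f 0%nat + INR (d - 1) * c.
Proof.
  intros Hd Hf. induction d as [|d IH]; [lia|]. destruct d; [simpl; lra|].
  specialize (IH ltac:(lia) ltac:(intros; apply Hf; lia)). specialize (Hf (S d) ltac:(lia)).
  change (sumR (S (S d)) f) with (sumR (S d) f + f (S d)).
  replace (S (S d) - 1)%nat with (S (S d - 1)) by lia. rewrite S_INR. lra.
Qed.

(* [(3/4)^2 + (d-1)/(4 d^2) < 1]: one coordinate near [3 rho / 4] and the others small. *)
Lemma enorm_between d (x : nat -> R) rho : (1 <= d)%nat ->
  rho / 2 < x 0%nat <= 3 * rho / 4 ->
  (forall i, (1 <= i < d)%nat -> x i ^ 2 <= (rho / (2 * INR d)) ^ 2) ->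
  rho / 2 < enorm d x < rho.
Proof.
  intros Hd Hx0 Hxi. unfold enorm.
  assert (HD : 1 <= INR d) by (apply (le_INR 1); auto).
  assert (Hrho : 0 < rho) by lra.
  assert (Hlo : x 0%nat ^ 2 <= sumR d (fun i => x i ^ 2))
    by (apply (sumR_ge_first d (fun i => x i ^ 2)); auto; intros; apply pow2_ge_0).
  assert (Hhi := sumR_le_first d (fun i => x i ^ 2) _ Hd Hxi).
  rewrite minus_INR in Hhi by lia. simpl INR in Hhi.
  assert (Hc : (INR d - 1) * (rho / (2 * INR d)) ^ 2 <= rho ^ 2 / 4).
  { assert (Ht : rho / (2 * INR d) * (2 * INR d) = rho) by (field; lra).
    set (t := rho / (2 * INR d)) in *. rewrite <- Ht. nra. }
  split.
  - rewrite <- (sqrt_pow2 (rho / 2)) by lra. apply sqrt_lt_1_alt. split; [apply pow2_ge_0|nra].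
  - rewrite <- (sqrt_pow2 rho) by lra. apply sqrt_lt_1_alt. split; [apply Rle_trans with (x 0%nat ^ 2); auto; apply pow2_ge_0|].
    nra.
Qed.

Lemma INR_div_bounds x y : (0 < y)%nat ->
  INR y * INR (x / y) <= INR x < INR y * (INR (x / y) + 1).
Proof.
  intros Hy. pose proof (Nat.div_mod_eq x y). pose proof (Nat.mod_upper_bound x y ltac:(lia)).
  assert (E : INR x = INR y * INR (x / y) + INR (x mod y))
    by (rewrite <- mult_INR, <- plus_INR; f_equal; auto).
  apply lt_INR in H0. pose proof (pos_INR (x mod y)). split; nra.
Qed.

Definition cube_sites (l : nat) (nl : list Z) : list (list Z) :=
  cart_prod (map (fun ni => zseq (Z.of_nat l * ni) l) nl).

Definition coords (nl : list Z) : nat -> Z := fun i => nth i nl 0%Z.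

Lemma in_cube_sites l nl k : In k (cube_sites l nl) <->
  Forall2 (fun z ni => (Z.of_nat l * ni <= z < Z.of_nat l * ni + Z.of_nat l)%Z) k nl.
Proof.
  unfold cube_sites. rewrite in_cart_prod.
  revert k; induction nl; intros k; simpl; split; intros H; inversion H; subst; constructor;
    try (apply in_zseq; auto); apply IHnl; auto.
Qed.

Lemma length_cube_sites l nl : length (cube_sites l nl) = (l ^ length nl)%nat.
Proof.
  unfold cube_sites. rewrite length_cart_prod. induction nl; simpl; auto.
  rewrite IHnl, length_zseq; auto.
Qed.

Lemma NoDup_cube_sites l nl : NoDup (cube_sites l nl).
Proof. apply NoDup_cart_prod. induction nl; simpl; constructor; auto. apply NoDup_zseq. Qed.

Lemma site_in_Qln_cube_sites d l nl k : length nl = d ->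
  site_in_Qln d l (coords nl) k -> In k (cube_sites l nl).
Proof.
  intros Hl [Hs Hk]. apply in_cube_sites. apply (Forall2_nth_iff _ _ _ 0%Z 0%Z).
  unfold site in Hs. split; [lia|]. intros i Hi. specialize (Hk i ltac:(lia)). unfold coords in Hk. lia.
Qed.

Lemma cube_sites_site d l nl k : length nl = d -> In k (cube_sites l nl) -> site d k.
Proof. intros Hl Hk. apply in_cube_sites, Forall2_length in Hk. unfold site; lia. Qed.

Lemma cube_sites_disjoint l nl nl' k : (1 <= l)%nat ->
  In k (cube_sites l nl) -> In k (cube_sites l nl') -> nl = nl'.
Proof.
  intros Hl Hx Hy. apply in_cube_sites in Hx, Hy. revert nl' Hy.
  induction Hx as [|z0 n0 zs ns Hzn Hx IH]; intros nl' Hy; inversion Hy; subst; auto.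
  f_equal; [nia|apply IH; auto].
Qed.

Lemma IZR_mul_nat l n : IZR (Z.of_nat l * n) = INR l * IZR n.
Proof. rewrite mult_IZR, <- INR_IZR_INZ; auto. Qed.
(** * The cubes of a layer *)


Section Layer.
Variables d a : nat.
Hypothesis Hd : (1 <= d)%nat.
Hypothesis Ha : (2 <= a)%nat.

Definition layer_has_zero_cube (l : nat) (omega : list Z -> bool) : Prop :=
  exists n : nat -> Z, (forall x, in_Qln d l n x -> in_layer d a l x) /\ V_zero_on_Qln d l n omega.

Definition radius (l : nat) : nat := (a ^ (l ^ d))%nat.
Definition first_lo (l : nat) : nat := (radius l / (2 * l) + 2)%nat.
Definition first_hi (l : nat) : nat := (3 * radius l / (4 * l))%nat.
Definition first_count (l : nat) : nat := (first_hi l - first_lo l)%nat.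
Definition side_count (l : nat) : nat := (radius l / (2 * d * l))%nat.

(* The cubes [Q(l,n)] with [first_lo <= n_0 < first_hi] and [0 <= n_i < side_count] for
   [i > 0]; they fill a slab where [R/2 < x_0 <= 3R/4] and [|x_i| <= R/(2d)], [R = radius l]. *)
Definition layer_index (l : nat) : list (list Z) :=
  cart_prod (zseq (Z.of_nat (first_lo l)) (first_count l) :: repeat (zseq 0 (side_count l)) (d - 1)).

Definition layer_blocks (l : nat) : list (list (list Z)) := map (cube_sites l) (layer_index l).

Definition layer_cyls (l : nat) : list cylinder := cyls_all_hit (layer_blocks l).

Lemma in_layer_index l nl : In nl (layer_index l) ->
  length nl = d /\
  (Z.of_nat (first_lo l) <= nth 0 nl 0 < Z.of_nat (first_lo l) + Z.of_nat (first_count l))%Z /\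
  forall i, (1 <= i < d)%nat -> (0 <= nth i nl 0 < Z.of_nat (side_count l))%Z.
Proof.
  intros H. apply in_cart_prod, (Forall2_nth_iff _ _ _ 0%Z nil) in H as [Hlen H].
  simpl in Hlen. rewrite repeat_length in Hlen. split; [lia|]. split.
  - specialize (H 0%nat ltac:(lia)). apply in_zseq in H; lia.
  - intros [|i] Hi; [lia|]. specialize (H (S i) ltac:(lia)). simpl in H.
    rewrite nth_repeat_lt in H by lia. apply in_zseq in H; lia.
Qed.

Lemma length_layer_index l : length (layer_index l) = (first_count l * side_count l ^ (d - 1))%nat.
Proof.
  unfold layer_index. rewrite length_cart_prod. simpl. rewrite length_zseq. f_equal.
  induction (d - 1)%nat; simpl; auto. rewrite IHn, length_zseq; auto.
Qed.

Lemma NoDup_layer_sites l : (1 <= l)%nat -> NoDup (concat (layer_blocks l)).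
Proof.
  intros Hl. apply NoDup_concat_map.
  - apply NoDup_cart_prod. constructor; [apply NoDup_zseq|].
    induction (d - 1)%nat; simpl; constructor; auto. apply NoDup_zseq.
  - intros; apply NoDup_cube_sites.
  - intros x y z _ _ Hx Hy. eapply cube_sites_disjoint; eauto.
Qed.

Lemma layer_params l : (1 <= l)%nat -> 16 * INR d * INR l <= INR (radius l) ->
  (first_lo l <= first_hi l)%nat /\
  INR (radius l) / 2 + 1 < INR l * INR (first_lo l) /\
  INR l * INR (first_hi l) <= 3 * INR (radius l) / 4 /\
  INR l * INR (side_count l) <= INR (radius l) / (2 * INR d) /\
  INR (radius l) <= 16 * INR d * INR l * INR (first_count l) /\
  INR (radius l) <= 16 * INR d * INR l * INR (side_count l).
Proof.
  intros Hl Hbig.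
  set (L := INR l) in *. set (D := INR d) in *. set (R := INR (radius l)) in *.
  assert (HL : 1 <= L) by (apply (le_INR 1); auto).
  assert (HD : 1 <= D) by (apply (le_INR 1); auto).
  pose proof (INR_div_bounds (radius l) (2 * l) ltac:(lia)) as [A1 A2].
  pose proof (INR_div_bounds (3 * radius l) (4 * l) ltac:(lia)) as [B1 B2].
  pose proof (INR_div_bounds (radius l) (2 * d * l) ltac:(nia)) as [C1 C2].
  assert (I2 : INR 2 = 2) by (simpl; lra). assert (I3 : INR 3 = 3) by (simpl; lra).
  assert (I4 : INR 4 = 4) by (simpl; lra).
  rewrite (mult_INR 2 l), I2 in A1, A2. rewrite (mult_INR 4 l), (mult_INR 3), I4, I3 in B1, B2.
  rewrite (mult_INR (2 * d) l), (mult_INR 2 d), I2 in C1, C2.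
  fold L D R in A1, A2, B1, B2, C1, C2.
  assert (EA : INR (first_lo l) = INR (radius l / (2 * l)) + 2)
    by (unfold first_lo; rewrite plus_INR; simpl; lra).
  change (INR (first_hi l)) with (INR (3 * radius l / (4 * l))).
  change (INR (side_count l)) with (INR (radius l / (2 * d * l))).
  set (A' := INR (radius l / (2 * l))) in *.
  set (K0 := INR (3 * radius l / (4 * l))) in *.
  set (K1 := INR (radius l / (2 * d * l))) in *.
  assert (HAK : (first_lo l <= first_hi l)%nat).
  { apply INR_le. rewrite EA. change (INR (first_hi l)) with K0. nra. }
  assert (EM : INR (first_count l) = K0 - (A' + 2))
    by (unfold first_count; rewrite minus_INR, EA by auto; reflexivity).
  rewrite EA, EM. repeat split; auto.
  - nra.
  - nra.
  - apply (Rmult_le_reg_r (2 * D)); [lra|]. replace (R / (2 * D) * (2 * D)) with R by (field; lra). nra.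
  - nra.
  - nra.
Qed.

Lemma layer_cube_coord_bounds l nl x : (1 <= l)%nat -> 16 * INR d * INR l <= INR (radius l) ->
  In nl (layer_index l) -> in_Qln d l (coords nl) x ->
  INR (radius l) / 2 < x 0%nat <= 3 * INR (radius l) / 4 /\
  forall i, (1 <= i < d)%nat -> x i ^ 2 <= (INR (radius l) / (2 * INR d)) ^ 2.
Proof.
  intros Hl Hbig Hnl Hx.
  destruct (in_layer_index l nl Hnl) as [_ [Hn0 Hni]].
  destruct (layer_params l Hl Hbig) as [Hlohi [Hlo [Hhi [Hside _]]]].
  assert (HL : 1 <= INR l) by (apply (le_INR 1); auto).
  assert (Ecount : INR (first_lo l) + INR (first_count l) = INR (first_hi l))
    by (unfold first_count; rewrite minus_INR by auto; ring).
  unfold in_Qln, coords in Hx. split.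
  - destruct (Hx 0%nat ltac:(lia)) as [Xa Xb]. rewrite IZR_mul_nat in Xa, Xb.
    assert (H1 : INR (first_lo l) <= IZR (nth 0 nl 0%Z)) by (rewrite INR_IZR_INZ; apply IZR_le; lia).
    assert (H2 : IZR (nth 0 nl 0%Z) + 1 <= INR (first_hi l)).
    { rewrite <- Ecount, !INR_IZR_INZ, <- plus_IZR, <- plus_IZR. apply IZR_le. lia. }
    split; nra.
  - intros i Hi. destruct (Hx i ltac:(lia)) as [Xa Xb]. rewrite IZR_mul_nat in Xa, Xb.
    specialize (Hni i Hi).
    assert (H1 : 0 <= IZR (nth i nl 0%Z)) by (apply IZR_le; lia).
    assert (H2 : IZR (nth i nl 0%Z) + 1 <= INR (side_count l)).
    { rewrite INR_IZR_INZ, <- plus_IZR. apply IZR_le. lia. }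
    assert (Hc : 1 / 2 <= INR (radius l) / (2 * INR d)).
    { assert (1 <= INR d) by (apply (le_INR 1); auto).
      apply (Rmult_le_reg_r (2 * INR d)); [lra|].
      replace (INR (radius l) / (2 * INR d) * (2 * INR d)) with (INR (radius l)) by (field; lra). nra. }
    set (c := INR (radius l) / (2 * INR d)) in *.
    assert (0 <= c - x i) by nra. assert (0 <= c + x i) by nra. nra.
Qed.

Lemma inner_radius_le l : (1 <= l)%nat -> 2 * INR a ^ ((l - 1) ^ d) <= INR (radius l).
Proof.
  intros Hl. unfold radius. rewrite pow_INR.
  assert (Hexp : ((l - 1) ^ d + 1 <= l ^ d)%nat).
  { pose proof (Nat.pow_lt_mono_l (l - 1) l d ltac:(lia) ltac:(lia)). lia. }
  assert (HaR : 2 <= INR a) by (apply (le_INR 2); auto).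
  apply Rle_trans with (INR a ^ ((l - 1) ^ d + 1)); [|apply Rle_pow; auto; lra].
  rewrite pow_add, pow_1. assert (0 <= INR a ^ (l - 1) ^ d) by (apply pow_le, pos_INR). nra.
Qed.

Lemma layer_cube_in_layer l nl x : (1 <= l)%nat -> 16 * INR d * INR l <= INR (radius l) ->
  In nl (layer_index l) -> in_Qln d l (coords nl) x -> in_layer d a l x.
Proof.
  intros Hl Hbig Hnl Hx.
  destruct (layer_cube_coord_bounds l nl x Hl Hbig Hnl Hx) as [Hx0 Hxi].
  destruct (enorm_between d x _ Hd Hx0 Hxi) as [Hlo Hhi].
  pose proof (inner_radius_le l Hl).
  unfold in_layer. replace (INR a ^ l ^ d) with (INR (radius l)) by (unfold radius; rewrite pow_INR; auto).
  lra.
Qed.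

Lemma layer_cyls_valid l c : (1 <= l)%nat -> In c (layer_cyls l) -> valid_cyl d c.
Proof.
  intros Hl Hc. destruct (cyls_all_hit_sites _ _ (NoDup_layer_sites l Hl) Hc) as [Hnd Hincl].
  split; auto. apply Forall_forall. intros [s b] Hs.
  assert (Hsite : In s (concat (layer_blocks l))) by (apply Hincl, in_map_iff; exists (s, b); auto).
  apply in_concat in Hsite as [B [HB Hs']]. apply in_map_iff in HB as [nl [<- Hnl]].
  destruct (in_layer_index l nl Hnl) as [Hlen _]. exact (cube_sites_site d l nl s Hlen Hs').
Qed.

Lemma layer_cyls_cover l omega : (1 <= l)%nat -> 16 * INR d * INR l <= INR (radius l) ->
  ~ layer_has_zero_cube l omega ->
  exists c, In c (layer_cyls l) /\ in_cyl c omega.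
Proof.
  intros Hl Hbig Hno. apply cyls_all_hit_cover.
  intros B HB. apply in_map_iff in HB as [nl [<- Hnl]].
  destruct (in_layer_index l nl Hnl) as [Hlen _].
  assert (HV : ~ V_zero_on_Qln d l (coords nl) omega).
  { intros HV. apply Hno. exists (coords nl). split; auto.
    intros x. exact (layer_cube_in_layer l nl x Hl Hbig Hnl). }
  apply not_all_ex_not in HV as [k Hk]. apply imply_to_and in Hk as [Hk Hok].
  exists k. split; [apply (site_in_Qln_cube_sites d); auto|]. destruct (omega k); auto; congruence.
Qed.

Lemma layer_cyls_nonempty l : (1 <= l)%nat -> layer_cyls l <> nil.
Proof.
  intros Hl E. destruct (cyls_all_hit_cover (fun _ => true) (layer_blocks l)) as [c [Hc _]].
  - intros B HB. apply in_map_iff in HB as [nl [<- Hnl]].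
    pose proof (length_cube_sites l nl) as Hlen.
    destruct (cube_sites l nl) as [|s S]; [|exists s; simpl; auto].
    pose proof (Nat.pow_nonzero l (length nl) ltac:(lia)). simpl in Hlen. lia.
  - fold (layer_cyls l) in Hc. rewrite E in Hc. contradiction.
Qed.

Lemma sum_layer_cyls p l :
  sum_cyl_prob p (layer_cyls l) = (1 - (1 - p) ^ (l ^ d)) ^ (first_count l * side_count l ^ (d - 1)).
Proof.
  unfold layer_cyls. rewrite (sum_cyl_prob_all_hit_const p (l ^ d)).
  - unfold layer_blocks. rewrite length_map, length_layer_index; auto.
  - intros B HB. apply in_map_iff in HB as [nl [<- Hnl]].
    rewrite length_cube_sites. destruct (in_layer_index l nl Hnl) as [-> _]; auto.
Qed.

Lemma card_layer_index_lower l : (1 <= l)%nat -> 16 * INR d * INR l <= INR (radius l) ->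
  INR (radius l) ^ d <= (16 * INR d * INR l) ^ d * INR (first_count l * side_count l ^ (d - 1)).
Proof.
  intros Hl Hbig. destruct (layer_params l Hl Hbig) as [_ [_ [_ [_ [HM HK]]]]].
  set (w := 16 * INR d * INR l) in *.
  assert (Hr : 0 <= INR (radius l)) by apply pos_INR.
  rewrite mult_INR, pow_INR.
  replace d with (S (d - 1)) at 1 2 by lia. simpl.
  replace (w * w ^ (d - 1) * (INR (first_count l) * INR (side_count l) ^ (d - 1)))
    with ((w * INR (first_count l)) * (w * INR (side_count l)) ^ (d - 1))
    by (rewrite Rpow_mult_distr; ring).
  apply Rmult_le_compat; auto; [apply pow_le; auto|]. apply pow_incr; auto.
Qed.

(* [N q^(l^d) >= (R^d q^(l^d)) / (16 d l)^d = (a^d q)^(l^d) / (16 d l)^d], exponential in [l]. *)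
Lemma layer_count_mul_ge q l : 0 < q -> 1 <= INR a ^ d * q -> (1 <= l)%nat ->
  16 * INR d * INR l <= INR (radius l) ->
  2 * (16 * INR d) ^ d * INR l ^ (d + 2) <= (INR a ^ d * q) ^ l ->
  INR l * INR (S l) <= INR (first_count l * side_count l ^ (d - 1)) * q ^ (l ^ d).
Proof.
  intros Hq Hb Hl Hbig Hexp.
  set (N := INR (first_count l * side_count l ^ (d - 1))).
  set (w := 16 * INR d * INR l).
  assert (HL : 1 <= INR l) by (apply (le_INR 1); auto).
  assert (Hw : 0 < w ^ d) by (apply pow_lt; unfold w; assert (1 <= INR d) by (apply (le_INR 1); auto); nra).
  assert (Hqm : 0 < q ^ (l ^ d)) by (apply pow_lt; auto).
  assert (HN := card_layer_index_lower l Hl Hbig). fold w N in HN.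
  assert (Hrq : INR (radius l) ^ d * q ^ (l ^ d) = (INR a ^ d * q) ^ (l ^ d)).
  { unfold radius. rewrite pow_INR, <- pow_mult, Rpow_mult_distr, <- pow_mult, Nat.mul_comm; auto. }
  assert (Hll : (INR a ^ d * q) ^ l <= (INR a ^ d * q) ^ (l ^ d)).
  { apply Rle_pow; auto. rewrite <- (Nat.pow_1_r l) at 1. apply Nat.pow_le_mono_r; lia. }
  assert (Hwd : w ^ d * INR l ^ 2 = (16 * INR d) ^ d * INR l ^ (d + 2))
    by (unfold w; rewrite pow_add, !Rpow_mult_distr; ring).
  assert (Hkey : w ^ d * (2 * INR l ^ 2) <= w ^ d * (N * q ^ (l ^ d))).
  { apply Rle_trans with (INR (radius l) ^ d * q ^ (l ^ d)); [lra|].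
    replace (w ^ d * (N * q ^ (l ^ d))) with ((w ^ d * N) * q ^ (l ^ d)) by ring.
    apply Rmult_le_compat_r; lra. }
  apply Rmult_le_reg_l in Hkey; auto. rewrite S_INR. nra.
Qed.

Lemma sum_layer_cyls_le p l : 0 < 1 - p <= 1 -> 1 <= INR a ^ d * (1 - p) -> (1 <= l)%nat ->
  16 * INR d * INR l <= INR (radius l) ->
  2 * (16 * INR d) ^ d * INR l ^ (d + 2) <= (INR a ^ d * (1 - p)) ^ l ->
  sum_cyl_prob p (layer_cyls l) <= / (INR l * INR (S l)).
Proof.
  intros Hq Hb Hl Hbig Hexp.
  pose proof (layer_count_mul_ge (1 - p) l ltac:(lra) Hb Hl Hbig Hexp) as Hc.
  rewrite sum_layer_cyls.
  set (N := (first_count l * side_count l ^ (d - 1))%nat) in *.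
  set (x := (1 - p) ^ (l ^ d)) in *.
  assert (Hx : 0 <= x <= 1) by (split; [apply pow_le|apply pow_le_one]; lra).
  pose proof (pow_one_sub_mul_le x N Hx).
  assert (0 <= (1 - x) ^ N) by (apply pow_le; lra).
  assert (Hz : 0 < INR l * INR (S l)) by (apply Rmult_lt_0_compat; apply lt_0_INR; lia).
  apply (Rmult_le_reg_r (INR l * INR (S l))); auto. rewrite Rinv_l by lra. nra.
Qed.

End Layer.

Lemma radius_ge_eventually d a : (1 <= d)%nat -> (2 <= a)%nat ->
  exists N, forall l, (N <= l)%nat -> 16 * INR d * INR l <= INR (radius d a l).
Proof.
  intros Hd Ha. destruct (poly_le_pow_eventually 1 2 (16 * INR d) ltac:(lra)) as [N HN].
  exists (Nat.max 1 N). intros l Hl. specialize (HN l ltac:(lia)). rewrite pow_1 in HN.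
  unfold radius. rewrite pow_INR.
  assert (HaR : 2 <= INR a) by (apply (le_INR 2); auto).
  apply Rle_trans with (2 ^ (l ^ d)); [apply Rle_trans with (2 ^ l); auto|apply pow_incr; lra].
  apply Rle_pow; [lra|]. rewrite <- (Nat.pow_1_r l) at 1. apply Nat.pow_le_mono_r; lia.
Qed.

Theorem mainTheorem11 (d : nat) (hd : (1 <= d)%nat) (p : R)
  (hp0 : 0 < p) (hp1 : p < 1) (a : nat) (ha : (1 <= a)%nat)
  (haq : INR a ^ d * (1 - p) > 1) :
  almost_surely d p (fun omega =>
    exists l0 : nat, forall l : nat, (1 <= l)%nat -> (l0 <= l)%nat ->
      exists n : nat -> Z,
        (forall x, in_Qln d l n x -> in_layer d a l x) /\
        V_zero_on_Qln d l n omega).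
Proof.
  assert (Ha : (2 <= a)%nat).
  { destruct (Nat.eq_dec a 1) as [->|]; [|lia]. rewrite pow1 in haq. lra. }
  destruct (radius_ge_eventually d a hd Ha) as [N1 HN1].
  destruct (poly_le_pow_eventually (d + 2) _ (2 * (16 * INR d) ^ d) haq) as [N2 HN2].
  set (L0 := Nat.max 1 (Nat.max N1 N2)).
  eapply almost_surely_impl; [|apply (almost_surely_eventually d p (layer_cyls d a) ltac:(lra) (layer_has_zero_cube d a) L0)].
  - intros omega [l0 Hl0]. exists l0. intros l _ Hl. exact (Hl0 l Hl).
  - lia.
  - intros l c Hl. apply layer_cyls_valid; auto; lia.
  - intros l Hl. apply layer_cyls_nonempty; auto; lia.
  - intros l Hl. apply sum_layer_cyls_le; auto; try lra; try lia; [apply HN1|apply HN2]; lia.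
  - intros l omega Hl. apply layer_cyls_cover; auto; try lia. apply HN1; lia.
Qed.
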